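(* Let $f:E\to\mathbb{R}$ be $L$-smooth (convexity of $f$ is not assumed), let $x^0\in E$, and consider the iterates of Algorithm AGMsDR (with either Option (a) or Option (b) used at every iteration). Then for every $k\ge 0$, $$A_k f(x^k)\le \min_{x\in E}\psi_k(x)=\psi_k(v^k),$$ and moreover $A_k\ge \frac{k^2}{4L}$.
   Context: $E$ is a finite-dimensional real vector space with a norm $\|\cdot\|$; $E^*$ is its dual, $\langle g,x\rangle$ denotes the value of $g\in E^*$ at $x\in E$, and $\|g\|_*=\max\{\langle g,x\rangle:\|x\|\le 1\}$. For $g\in E^*$, $g^{\#}$ denotes a (fixed) element $s\in E$ with $\|s\|\le 1$ and $\langle g,s\rangle=\|g\|_*$. A prox-function $d:E\to\mathbb{R}$ is continuously differentiable, convex, $1$-strongly convex with respect to $\|\cdot\|$ (i.e. $d(y)-d(x)-\langle\nabla d(x),y-x\rangle\ge\frac12\|y-x\|^2$ for all $x,y\in E$) and satisfies $\min_E d=0$; its Bregman divergence is $V(x,z)=d(x)-d(z)-\langle\nabla d(z),x-z\rangle$. A function $f:E\to\mathbb{R}$ is $L$-smooth ($L>0$) if it is continuously differentiable and $\|\nabla f(x)-\nabla f(y)\|_*\le L\|x-y\|$ for all $x,y\in E$. Algorithm AGMsDR (input $x^0\in E$, and $L$ for Option (a)): set $A_0=0$, $v^0=x^0$, $\psi_0(x)=V(x,x^0)$. For $k=0,1,2,\dots$: 1. Choose $\beta_k\in\arg\min_{\beta\in[0,1]} f(v^k+\beta(x^k-v^k))$ (a global minimizer over the interval) and set $y^k=v^k+\beta_k(x^k-v^k)$.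 2. Option (a): $x^{k+1}\in\arg\min_{x\in E}\{f(y^k)+\langle\nabla f(y^k),x-y^k\rangle+\frac L2\|x-y^k\|^2\}$, and $a_{k+1}>0$ solves $\frac{a_{k+1}^2}{A_k+a_{k+1}}=\frac1L$. Option (b): $h_{k+1}\in\arg\min_{h\ge0} f(y^k-h(\nabla f(y^k))^{\#})$, $x^{k+1}=y^k-h_{k+1}(\nabla f(y^k))^{\#}$, and $a_{k+1}$ is the largest solution of $f(y^k)-\frac{a_{k+1}^2}{2(A_k+a_{k+1})}\|\nabla f(y^k)\|_*^2=f(x^{k+1})$. 3. $A_{k+1}=A_k+a_{k+1}$; $\psi_{k+1}(x)=\psi_k(x)+a_{k+1}\{f(y^k)+\langle\nabla f(y^k),x-y^k\rangle\}$; $v^{k+1}=\arg\min_{x\in E}\psi_{k+1}(x)$. It is assumed that all the minima in the algorithm are attained, and that $\nabla f(y^k)\neq 0$ for all iterations considered (otherwise $y^k$ is a stationary point and the method stops). *)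

(* classical reals. E is modelled as R^n = (Fin.t n -> R);
   its dual E^* is identified with R^n via the standard pairing <g,x> = sum g_i x_i. *)
From Stdlib Require Import Reals Lra Classical ClassicalEpsilon FunctionalExtensionality.
From Stdlib Require Vectors.Fin.
Open Scope R_scope.

Definition Vec (n : nat) : Type := Fin.t n -> R.

Definition vadd {n} (x y : Vec n) : Vec n := fun i => x i + y i.
Definition vsub {n} (x y : Vec n) : Vec n := fun i => x i - y i.
Definition vscal {n} (c : R) (x : Vec n) : Vec n := fun i => c * x i.
Definition vzero {n} : Vec n := fun _ => 0.

Fixpoint pair (n : nat) : Vec n -> Vec n -> R :=
  match n return Vec n -> Vec n -> R with
  | O => fun _ _ => 0
  | S m => fun g x => g Fin.F1 * x Fin.F1
                      + pair m (fun i => g (Fin.FS i)) (fun i => x (Fin.FS i))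
  end.

Definition is_norm {n} (N : Vec n -> R) : Prop :=
  (forall x, 0 <= N x) /\
  (forall x, N x = 0 -> x = vzero) /\
  (forall c x, N (vscal c x) = Rabs c * N x) /\
  (forall x y, N (vadd x y) <= N x + N y).

Definition dual_set {n} (N : Vec n -> R) (g : Vec n) : R -> Prop :=
  fun r => exists x, N x <= 1 /\ r = pair n g x.

Definition dnorm {n} (N : Vec n -> R) (g : Vec n) : R :=
  epsilon (inhabits 0) (fun r => is_lub (dual_set N g) r).

Definition is_sharp {n} (N : Vec n -> R) (sharp : Vec n -> Vec n) : Prop :=
  forall g, N (sharp g) <= 1 /\ pair n g (sharp g) = dnorm N g.

Definition has_gradient {n} (N : Vec n -> R) (f : Vec n -> R) (g : Vec n) (x : Vec n) : Prop :=
  forall eps, 0 < eps -> exists delta, 0 < delta /\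
    forall h, N h < delta ->
      Rabs (f (vadd x h) - f x - pair n g h) <= eps * N h.

Definition C1 {n} (N : Vec n -> R) (f : Vec n -> R) (gf : Vec n -> Vec n) : Prop :=
  (forall x, has_gradient N f (gf x) x) /\
  (forall x eps, 0 < eps -> exists delta, 0 < delta /\
     forall y, N (vsub y x) < delta -> dnorm N (vsub (gf y) (gf x)) < eps).

Definition L_smooth {n} (N : Vec n -> R) (L : R) (f : Vec n -> R) (gf : Vec n -> Vec n) : Prop :=
  0 < L /\ C1 N f gf /\
  forall x y, dnorm N (vsub (gf x) (gf y)) <= L * N (vsub x y).

Definition convex_fun {n} (d : Vec n -> R) : Prop :=
  forall x y t, 0 <= t <= 1 ->
    d (vadd (vscal t x) (vscal (1 - t) y)) <= t * d x + (1 - t) * d y.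

Definition prox_function {n} (N : Vec n -> R) (d : Vec n -> R) (gd : Vec n -> Vec n) : Prop :=
  C1 N d gd /\ convex_fun d /\
  (forall x y, d y - d x - pair n (gd x) (vsub y x) >= / 2 * (N (vsub y x)) ^ 2) /\
  (exists z, d z = 0) /\ (forall z, 0 <= d z).

Definition bregman {n} (d : Vec n -> R) (gd : Vec n -> Vec n) (x z : Vec n) : R :=
  d x - d z - pair n (gd z) (vsub x z).

Fixpoint psi {n} (d : Vec n -> R) (gd : Vec n -> Vec n) (f : Vec n -> R) (gf : Vec n -> Vec n)
  (x0 : Vec n) (a : nat -> R) (y : nat -> Vec n) (k : nat) (x : Vec n) : R :=
  match k with
  | O => bregman d gd x x0
  | S j => psi d gd f gf x0 a y j x
           + a (S j) * (f (y j) + pair n (gf (y j)) (vsub x (y j)))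
  end.

Inductive step_option : Type := OptionA | OptionB.

(* The sequences x, v, y, beta, h, a, A are iterates of AGMsDR started at x0,
   using the option opt at every iteration. a (S k) = a_{k+1}, h (S k) = h_{k+1}. *)
Definition AGMsDR_iterates {n} (N : Vec n -> R) (sharp : Vec n -> Vec n) (L : R)
  (f : Vec n -> R) (gf : Vec n -> Vec n) (d : Vec n -> R) (gd : Vec n -> Vec n)
  (opt : step_option) (x0 : Vec n)
  (x v y : nat -> Vec n) (beta h a A : nat -> R) : Prop :=
  x 0%nat = x0 /\ v 0%nat = x0 /\ A 0%nat = 0 /\
  forall k : nat,
    (0 <= beta k <= 1 /\
     (forall b, 0 <= b <= 1 ->
        f (vadd (v k) (vscal (beta k) (vsub (x k) (v k))))
        <= f (vadd (v k) (vscal b (vsub (x k) (v k))))) /\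
     y k = vadd (v k) (vscal (beta k) (vsub (x k) (v k)))) /\
    match opt with
    | OptionA =>
        (forall z,
           f (y k) + pair n (gf (y k)) (vsub (x (S k)) (y k))
             + L / 2 * (N (vsub (x (S k)) (y k))) ^ 2
           <= f (y k) + pair n (gf (y k)) (vsub z (y k))
             + L / 2 * (N (vsub z (y k))) ^ 2) /\
        0 < a (S k) /\ (a (S k)) ^ 2 / (A k + a (S k)) = / L
    | OptionB =>
        let s := sharp (gf (y k)) in
        (0 <= h (S k) /\
         (forall h', 0 <= h' ->
            f (vsub (y k) (vscal (h (S k)) s)) <= f (vsub (y k) (vscal h' s))) /\
         x (S k) = vsub (y k) (vscal (h (S k)) s)) /\
        (A k + a (S k) <> 0 /\
         f (y k) - (a (S k)) ^ 2 / (2 * (A k + a (S k))) * (dnorm N (gf (y k))) ^ 2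
           = f (x (S k)) /\
         forall a', A k + a' <> 0 ->
           f (y k) - a' ^ 2 / (2 * (A k + a')) * (dnorm N (gf (y k))) ^ 2 = f (x (S k)) ->
           a' <= a (S k))
    end /\
    A (S k) = A k + a (S k) /\
    (forall z, psi d gd f gf x0 a y (S k) (v (S k)) <= psi d gd f gf x0 a y (S k) z).

(** Each [psi_k] is the prox-function
    plus an affine map, hence 1-strongly convex, so its minimiser [v^k] satisfies
    [psi_k z >= psi_k v^k + |z - v^k|^2 / 2]. The exact line search defining [y^k] gives
    [f y^k <= f x^k] and, by first-order optimality of [beta_k], [<grad f y^k, v^k - y^k> >= 0].
    Either option decreases [f] by at least [|grad f y^k|_*^2 / (2L)] and yields a weight with
    [A_{k+1} <= L a_{k+1}^2]; Young's inequality then propagates [A_k f x^k <= psi_k v^k], and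
    [A_{k+1} <= L a_{k+1}^2] forces [sqrt A_{k+1} >= sqrt A_k + 1 / (2 sqrt L)].
    Since the dual norm is defined as a supremum, one first needs that every norm on [R^n]
    dominates the coordinates, so that this supremum is finite. *)

From Stdlib Require Import Reals Lra Lia Classical ClassicalEpsilon FunctionalExtensionality.
From Stdlib Require Vectors.Fin.
Open Scope R_scope.

Ltac vec_ext := apply functional_extensionality; intro; unfold vadd, vsub, vscal, vzero; try ring.

Ltac pair_induction n := let IH := fresh "IH" in
  induction n as [|n IH]; intros; simpl;
  [ring | unfold vadd, vsub, vscal, vzero in *; rewrite IH; ring].

Lemma pair_add_l n : forall g g' x : Vec n, pair n (vadd g g') x = pair n g x + pair n g' x.
Proof. pair_induction n. Qed.

Lemma pair_sub_l n : forall g g' x : Vec n, pair n (vsub g g') x = pair n g x - pair n g' x.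
Proof. pair_induction n. Qed.

Lemma pair_scal_l n : forall c (g x : Vec n), pair n (vscal c g) x = c * pair n g x.
Proof. pair_induction n. Qed.

Lemma pair_sub_r n : forall g x x' : Vec n, pair n g (vsub x x') = pair n g x - pair n g x'.
Proof. pair_induction n. Qed.

Lemma pair_scal_r n : forall c (g x : Vec n), pair n g (vscal c x) = c * pair n g x.
Proof. pair_induction n. Qed.

Lemma pair_zero_r n : forall g : Vec n, pair n g vzero = 0.
Proof. pair_induction n. Qed.

Lemma pair_self_nonneg n : forall g : Vec n, 0 <= pair n g g.
Proof.
  induction n as [|n IH]; intros g; simpl; [lra|].
  specialize (IH (fun i => g (Fin.FS i))). nra.
Qed.

Lemma pair_self_eq0 n : forall g : Vec n, pair n g g = 0 -> g = vzero.
Proof.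
  induction n as [|n IH]; intros g Hg.
  - apply functional_extensionality; intro i; apply Fin.case0; exact i.
  - simpl in Hg. pose proof (pair_self_nonneg n (fun i => g (Fin.FS i))).
    assert (Hhead : g Fin.F1 = 0) by nra.
    assert (Htail : (fun i => g (Fin.FS i)) = vzero) by (apply IH; nra).
    apply functional_extensionality; intro i. pattern i; apply Fin.caseS'.
    + exact Hhead.
    + intro j. exact (f_equal (fun u => u j) Htail).
Qed.

Lemma pair_bounded n : forall g : Vec n, exists B, forall x M,
  (forall i, Rabs (x i) <= M) -> pair n g x <= B * M.
Proof.
  induction n as [|n IH]; intros g; simpl.
  - exists 0. intros. lra.
  - destruct (IH (fun i => g (Fin.FS i))) as [B HB].
    exists (Rabs (g Fin.F1) + B). intros x M Hx.
    specialize (HB (fun i => x (Fin.FS i)) M (fun i => Hx (Fin.FS i))).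
    assert (Rabs (g Fin.F1) * Rabs (x Fin.F1) <= Rabs (g Fin.F1) * M)
      by (apply Rmult_le_compat_l; [apply Rabs_pos | apply Hx]).
    pose proof (Rle_abs (g Fin.F1 * x Fin.F1)). rewrite Rabs_mult in *. lra.
Qed.

Section NormFacts.
Context {n : nat} (N : Vec n -> R) (HN : is_norm N).

Lemma N_nonneg x : 0 <= N x.
Proof. apply HN. Qed.

Lemma N_eq0 x : N x = 0 -> x = vzero.
Proof. apply HN. Qed.

Lemma N_scal c x : N (vscal c x) = Rabs c * N x.
Proof. apply HN. Qed.

Lemma N_triang x y : N (vadd x y) <= N x + N y.
Proof. apply HN. Qed.

Lemma N_zero : N vzero = 0.
Proof.
  replace (@vzero n) with (vscal 0 (@vzero n)) by vec_ext.
  rewrite N_scal, Rabs_R0; ring.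
Qed.

Lemma N_sub_triang x y : N (vsub x y) <= N x + N y.
Proof.
  replace (vsub x y) with (vadd x (vscal (-1) y)) by vec_ext.
  rewrite <- (Rmult_1_l (N y)), <- Rabs_R1, <- Rabs_Ropp, <- N_scal. apply N_triang.
Qed.

End NormFacts.

(** * Norms on [R^n] dominate the coordinates *)

Definition vtl {n} (x : Vec (S n)) : Vec n := fun i => x (Fin.FS i).
Definition vcons {n} (c : R) (u : Vec n) : Vec (S n) :=
  fun i => Fin.caseS' i (fun _ => R) c u.

Ltac vcons_ext := apply functional_extensionality; let i := fresh "i" in intro i;
  pattern i; apply Fin.caseS'; [ | intro ]; cbn;
  unfold vadd, vsub, vscal, vzero, vcons, vtl; cbn; try ring.

Lemma is_norm_vcons0 n (N : Vec (S n) -> R) :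
  is_norm N -> is_norm (fun u : Vec n => N (vcons 0 u)).
Proof.
  intros [H0 [H1 [H2 H3]]]. split; [|split; [|split]].
  - intro; apply H0.
  - intros u Hu. apply H1 in Hu. apply functional_extensionality; intro j.
    exact (f_equal (fun z => z (Fin.FS j)) Hu).
  - intros c u. rewrite <- H2. f_equal. vcons_ext.
  - intros u w. replace (vcons 0 (vadd u w)) with (vadd (vcons 0 u) (vcons 0 w)) by vcons_ext.
    apply H3.
Qed.

Lemma norm_le_sup n : forall N : Vec n -> R, is_norm N ->
  exists K, 0 <= K /\ forall x M, (forall j, Rabs (x j) <= M) -> N x <= K * M.
Proof.
  induction n as [|n IH]; intros N HN.
  - exists 0. split; [lra|]. intros x M _.
    replace x with (@vzero 0) by (apply functional_extensionality; intro i; apply Fin.case0; exact i).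
    rewrite (N_zero N HN). lra.
  - destruct (IH _ (is_norm_vcons0 n N HN)) as [K [HK HKb]].
    pose proof (N_nonneg N HN (vcons 1 vzero)) as He.
    exists (N (vcons 1 vzero) + K). split; [lra|]. intros x M Hx.
    replace x with (vadd (vscal (x Fin.F1) (vcons 1 vzero)) (vcons 0 (vtl x))) by vcons_ext.
    eapply Rle_trans; [apply (N_triang N HN)|]. rewrite (N_scal N HN).
    specialize (HKb (vtl x) M (fun j => Hx (Fin.FS j))).
    assert (Rabs (x Fin.F1) * N (vcons 1 vzero) <= M * N (vcons 1 vzero))
      by (apply Rmult_le_compat_r; [lra | apply Hx]).
    lra.
Qed.

Lemma Fin_eventually_forall n : forall P : Fin.t n -> nat -> Prop,
  (forall i, exists k0, forall k, (k0 <= k)%nat -> P i k) ->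
  exists k0, forall i k, (k0 <= k)%nat -> P i k.
Proof.
  induction n as [|n IH]; intros P HP.
  - exists 0%nat. intro i. apply Fin.case0. exact i.
  - destruct (IH (fun j => P (Fin.FS j)) (fun j => HP (Fin.FS j))) as [k1 Hk1].
    destruct (HP Fin.F1) as [k0 Hk0].
    exists (Nat.max k0 k1). intros i k Hk. pattern i; apply Fin.caseS'.
    + apply Hk0; lia.
    + intro j. apply Hk1; lia.
Qed.

Lemma norm_cv_of_coord_cv n (N : Vec n -> R) (u : nat -> Vec n) (w : Vec n) :
  is_norm N -> (forall j, Un_cv (fun k => u k j) (w j)) ->
  Un_cv (fun k => N (vsub (u k) w)) 0.
Proof.
  intros HN Hu eps Heps.
  destruct (norm_le_sup n N HN) as [K [HK HKb]].
  set (e := eps / (2 * (K + 1))).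
  assert (He : 0 < e) by (unfold e; apply Rdiv_lt_0_compat; lra).
  assert (HKe : (K + 1) * e = eps / 2) by (unfold e; field; lra).
  destruct (Fin_eventually_forall n (fun j k => Rabs (u k j - w j) < e)) as [k0 Hk0].
  { intro j. exact (Hu j e He). }
  exists k0. intros k Hk. unfold Rdist.
  rewrite Rminus_0_r, Rabs_pos_eq by apply (N_nonneg N HN).
  apply Rle_lt_trans with (K * e); [|nra].
  apply HKb. intro j. left. exact (Hk0 j k Hk).
Qed.

Lemma Un_cv_0_of_lt_inv_INR (e : nat -> R) :
  (forall k, 0 <= e k < / INR (S k)) -> Un_cv e 0.
Proof.
  intros He eps Heps.
  destruct (archimed_cor1 eps Heps) as [k0 [Hk0 Hk0pos]].
  exists k0. intros k Hk. unfold Rdist.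
  rewrite Rminus_0_r, Rabs_pos_eq by apply He.
  apply Rlt_le_trans with (/ INR (S k)); [apply He|].
  apply Rle_trans with (/ INR k0); [|lra].
  apply Rinv_le_contravar; [apply lt_0_INR; exact Hk0pos | apply le_INR; lia].
Qed.

Lemma Cauchy_crit_of_dist_bound (s e : nat -> R) (C : R) : 0 < C ->
  (forall k m, Rabs (s k - s m) <= C * (e k + e m)) -> Un_cv e 0 -> Cauchy_crit s.
Proof.
  intros HC Hs He eps Heps.
  destruct (He (eps / (2 * C))) as [k0 Hk0]; [apply Rdiv_lt_0_compat; lra|].
  exists k0. intros k m Hk Hm. unfold Rdist.
  pose proof (Hk0 k Hk) as Hek. pose proof (Hk0 m Hm) as Hem.
  unfold Rdist in Hek, Hem. rewrite Rminus_0_r in Hek, Hem.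
  pose proof (Rle_abs (e k)). pose proof (Rle_abs (e m)).
  assert (C * (e k + e m) < C * (2 * (eps / (2 * C)))) by (apply Rmult_lt_compat_l; lra).
  replace (C * (2 * (eps / (2 * C)))) with eps in * by (field; lra).
  specialize (Hs k m). lra.
Qed.

Lemma le_0_of_le_cv_0 (c : R) (s : nat -> R) : (forall k, c <= s k) -> Un_cv s 0 -> c <= 0.
Proof.
  intros Hc Hs. apply Rnot_lt_le; intro Hpos.
  destruct (Hs c Hpos) as [k Hk]. specialize (Hk k (Nat.le_refl k)).
  unfold Rdist in Hk. rewrite Rminus_0_r in Hk.
  pose proof (Rle_abs (s k)). specialize (Hc k). lra.
Qed.

(* The core of the compactness argument: [e_1] has positive distance to the hyperplane
   [x_1 = 0], since a minimising sequence would be Cauchy there. *)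
Lemma norm_vcons1_bounded_below n (N : Vec (S n) -> R) (C : R) : is_norm N -> 0 < C ->
  (forall (u : Vec n) j, Rabs (u j) <= C * N (vcons 0 u)) ->
  exists delta, 0 < delta /\ forall u, delta <= N (vcons 1 u).
Proof.
  intros HN HC Htail. apply NNPP; intro Hgap.
  assert (Hsmall : forall k : nat, exists u, N (vcons 1 u) < / INR (S k)).
  { intro k. apply NNPP; intro Hk. apply Hgap. exists (/ INR (S k)). split.
    - apply Rinv_0_lt_compat, lt_0_INR; lia.
    - intro u. apply Rnot_lt_le; intro Hu. apply Hk. exists u; exact Hu. }
  destruct (choice _ Hsmall) as [u Hu].
  set (e := fun k => N (vcons 1 (u k))).
  assert (He : Un_cv e 0).
  { apply Un_cv_0_of_lt_inv_INR. intro k. split; [apply (N_nonneg N HN) | apply Hu]. }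
  assert (Hcauchy : forall j, Cauchy_crit (fun k => u k j)).
  { intro j. apply (Cauchy_crit_of_dist_bound _ e C HC); [|exact He].
    intros k m. change (u k j - u m j) with (vsub (u k) (u m) j).
    eapply Rle_trans; [apply Htail|].
    replace (vcons 0 (vsub (u k) (u m))) with (vsub (vcons 1 (u k)) (vcons 1 (u m))) by vcons_ext.
    apply Rmult_le_compat_l; [lra | apply (N_sub_triang N HN)]. }
  set (w := fun j => proj1_sig (R_complete _ (Hcauchy j))).
  assert (Hw : forall j, Un_cv (fun k => u k j) (w j))
    by (intro j; exact (proj2_sig (R_complete _ (Hcauchy j)))).
  pose proof (CV_plus _ _ _ _ He (norm_cv_of_coord_cv n _ u w (is_norm_vcons0 n N HN) Hw))
    as Hcv.
  rewrite Rplus_0_r in Hcv.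
  assert (Hw0 : N (vcons 1 w) <= 0).
  { refine (le_0_of_le_cv_0 _ _ _ Hcv). intro k. unfold e.
    replace (vcons 1 w) with (vsub (vcons 1 (u k)) (vcons 0 (vsub (u k) w))) by vcons_ext.
    apply (N_sub_triang N HN). }
  assert (Hz : vcons 1 w = vzero)
    by (apply (N_eq0 N HN); pose proof (N_nonneg N HN (vcons 1 w)); lra).
  pose proof (f_equal (fun z => z Fin.F1) Hz) as H1. cbn in H1. unfold vzero in H1. lra.
Qed.

Lemma norm_coord_bound n : forall N : Vec n -> R, is_norm N ->
  exists C, 0 < C /\ forall x i, Rabs (x i) <= C * N x.
Proof.
  induction n as [|n IH]; intros N HN.
  - exists 1. split; [lra|]. intros x i. apply Fin.case0; exact i.
  - set (Nt := fun u : Vec n => N (vcons 0 u)).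
    destruct (IH Nt (is_norm_vcons0 n N HN)) as [C [HC HCb]].
    destruct (norm_vcons1_bounded_below n N C HN HC HCb) as [delta [Hdelta Hdb]].
    set (r := / delta). assert (Hr : 0 < r) by (apply Rinv_0_lt_compat; lra).
    set (e0 := N (vcons 1 vzero)). assert (He0 : 0 <= e0) by apply (N_nonneg N HN).
    assert (Hhead : forall x : Vec (S n), Rabs (x Fin.F1) <= r * N x).
    { intro x. destruct (Req_dec (x Fin.F1) 0) as [Hz|Hz].
      - rewrite Hz, Rabs_R0. pose proof (N_nonneg N HN x). nra.
      - replace x with (vscal (x Fin.F1) (vcons 1 (vscal (/ x Fin.F1) (vtl x)))) at 2
          by (vcons_ext; field; exact Hz).
        rewrite (N_scal N HN). unfold r.
        pose proof (Hdb (vscal (/ x Fin.F1) (vtl x))). pose proof (Rabs_pos (x Fin.F1)).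
        apply Rmult_le_reg_l with delta; [lra|]. field_simplify; [nra | lra]. }
    assert (Htl : forall x : Vec (S n), Nt (vtl x) <= N x + r * N x * e0).
    { intro x. unfold Nt.
      replace (vcons 0 (vtl x)) with (vsub x (vscal (x Fin.F1) (vcons 1 vzero))) by vcons_ext.
      eapply Rle_trans; [apply (N_sub_triang N HN)|]. rewrite (N_scal N HN).
      pose proof (Hhead x). fold e0. nra. }
    assert (Hre0 : 0 <= r * e0) by (apply Rmult_le_pos; lra).
    exists (r + C * (1 + r * e0)). split; [nra|].
    intros x i. pose proof (N_nonneg N HN x). pose proof (Hhead x).
    assert (0 <= C * (1 + r * e0) * N x) by (apply Rmult_le_pos; nra).
    pattern i; apply Fin.caseS'; [nra|].
    intro j. pose proof (HCb (vtl x) j). pose proof (Htl x).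
    assert (C * Nt (vtl x) <= C * (N x + r * N x * e0)) by (apply Rmult_le_compat_l; lra).
    unfold vtl in *. nra.
Qed.
(** * Dual norm and smoothness *)

Section DualNorm.
Context {n : nat} (N : Vec n -> R) (HN : is_norm N).

Lemma dnorm_is_lub g : is_lub (dual_set N g) (dnorm N g).
Proof.
  unfold dnorm. apply epsilon_spec.
  assert (Hb : bound (dual_set N g)).
  { destruct (norm_coord_bound n N HN) as [C [HC HCb]].
    destruct (pair_bounded n g) as [B HB].
    exists (B * C). intros r [x [Hx ->]]. apply HB. intro i. specialize (HCb x i). nra. }
  assert (He : exists r, dual_set N g r).
  { exists 0, vzero. rewrite (N_zero N HN), pair_zero_r. split; lra. }
  destruct (completeness _ Hb He) as [m Hm]. exists m; exact Hm.
Qed.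

Lemma dnorm_nonneg g : 0 <= dnorm N g.
Proof.
  apply (dnorm_is_lub g). exists vzero. rewrite (N_zero N HN), pair_zero_r. split; lra.
Qed.

Lemma pair_le_dnorm g x : pair n g x <= dnorm N g * N x.
Proof.
  destruct (Req_dec (N x) 0) as [Hz|Hz].
  - apply (N_eq0 N HN) in Hz. subst x. rewrite pair_zero_r, (N_zero N HN). lra.
  - pose proof (N_nonneg N HN x).
    assert (Hin : dual_set N g (pair n g (vscal (/ N x) x))).
    { exists (vscal (/ N x) x). split; [|reflexivity].
      rewrite (N_scal N HN), Rabs_pos_eq by (left; apply Rinv_0_lt_compat; lra).
      rewrite Rinv_l; lra. }
    apply (dnorm_is_lub g) in Hin. rewrite pair_scal_r in Hin.
    apply Rmult_le_reg_l with (/ N x); [apply Rinv_0_lt_compat; lra|].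
    replace (/ N x * (dnorm N g * N x)) with (dnorm N g) by (field; lra). lra.
Qed.

Lemma pair_ge_neg_dnorm g x : - (dnorm N g * N x) <= pair n g x.
Proof.
  pose proof (pair_le_dnorm g (vscal (- (1)) x)) as H.
  rewrite pair_scal_r, (N_scal N HN), Rabs_Ropp, Rabs_R1 in H. lra.
Qed.

Lemma dnorm_pos g : g <> vzero -> 0 < dnorm N g.
Proof.
  intro Hg.
  assert (HNg : 0 < N g).
  { destruct (N_nonneg N HN g) as [H|H]; [exact H|].
    symmetry in H. apply (N_eq0 N HN) in H. contradiction. }
  assert (Hgg : 0 < pair n g g).
  { destruct (pair_self_nonneg n g) as [H|H]; [exact H|].
    symmetry in H. apply pair_self_eq0 in H. contradiction. }
  pose proof (pair_le_dnorm g g). pose proof (dnorm_nonneg g). nra.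
Qed.

Lemma pair_nonneg_of_min_along_ray F g y w : has_gradient N F g y ->
  (forall t, 0 < t <= 1 -> F y <= F (vadd y (vscal t w))) -> 0 <= pair n g w.
Proof.
  intros Hg Hmin. apply Rnot_lt_le. intro Hp.
  destruct (Req_dec (N w) 0) as [Hz|Hz].
  - apply (N_eq0 N HN) in Hz. subst w. rewrite pair_zero_r in Hp. lra.
  - pose proof (N_nonneg N HN w) as Hw.
    set (p := pair n g w) in *.
    destruct (Hg (- p / (2 * N w))) as [delta [Hd Hdb]]; [apply Rdiv_lt_0_compat; lra|].
    set (t := Rmin 1 (delta / (2 * N w))).
    assert (Ht0 : 0 < t) by (unfold t; apply Rmin_pos; [lra | apply Rdiv_lt_0_compat; lra]).
    assert (Ht1 : t <= 1) by apply Rmin_l.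
    assert (Ht2 : t <= delta / (2 * N w)) by apply Rmin_r.
    assert (HNt : N (vscal t w) = t * N w) by (rewrite (N_scal N HN), Rabs_pos_eq; lra).
    assert (Hlt : N (vscal t w) < delta).
    { rewrite HNt. apply Rle_lt_trans with (delta / (2 * N w) * N w).
      - apply Rmult_le_compat_r; lra.
      - replace (delta / (2 * N w) * N w) with (delta / 2) by (field; lra). lra. }
    specialize (Hdb _ Hlt). rewrite pair_scal_r, HNt in Hdb. fold p in Hdb.
    specialize (Hmin t (conj Ht0 Ht1)).
    pose proof (Rle_abs (F (vadd y (vscal t w)) - F y - t * p)).
    replace (- p / (2 * N w) * (t * N w)) with (- p * t / 2) in Hdb by (field; lra).
    nra.
Qed.

Lemma derivable_pt_lim_along_line F gF y w t : (forall p, has_gradient N F (gF p) p) ->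
  derivable_pt_lim (fun s => F (vadd y (vscal s w))) t (pair n (gF (vadd y (vscal t w))) w).
Proof.
  intros Hg eps Heps.
  set (p := vadd y (vscal t w)).
  pose proof (N_nonneg N HN w) as Hw.
  destruct (Hg p (eps / (2 * (N w + 1)))) as [delta [Hd Hdb]]; [apply Rdiv_lt_0_compat; lra|].
  assert (Hd' : 0 < delta / (N w + 1)) by (apply Rdiv_lt_0_compat; lra).
  exists (mkposreal _ Hd'). intros s Hs0 Hsd. simpl in Hsd.
  replace (vadd y (vscal (t + s) w)) with (vadd p (vscal s w)) by (unfold p; vec_ext).
  assert (Hlt : N (vscal s w) < delta).
  { rewrite (N_scal N HN). apply Rle_lt_trans with (Rabs s * (N w + 1)).
    - pose proof (Rabs_pos s). nra.
    - apply Rmult_lt_reg_r with (/ (N w + 1)); [apply Rinv_0_lt_compat; lra|].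
      replace (Rabs s * (N w + 1) * / (N w + 1)) with (Rabs s) by (field; lra). exact Hsd. }
  specialize (Hdb _ Hlt). rewrite pair_scal_r, (N_scal N HN) in Hdb.
  assert (Hsa : 0 < Rabs s) by (apply Rabs_pos_lt; exact Hs0).
  replace ((F (vadd p (vscal s w)) - F p) / s - pair n (gF p) w)
    with ((F (vadd p (vscal s w)) - F p - s * pair n (gF p) w) / s) by (field; exact Hs0).
  unfold Rdiv at 1. rewrite Rabs_mult, Rabs_inv.
  apply Rmult_lt_reg_r with (Rabs s); [exact Hsa|].
  rewrite Rmult_assoc, Rinv_l, Rmult_1_r by lra.
  eapply Rle_lt_trans; [exact Hdb|].
  assert (Hq : N w / (2 * (N w + 1)) < 1).
  { apply Rmult_lt_reg_r with (2 * (N w + 1)); [lra|].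
    unfold Rdiv. rewrite Rmult_assoc, Rinv_l by lra. lra. }
  replace (eps / (2 * (N w + 1)) * (Rabs s * N w))
    with (Rabs s * eps * (N w / (2 * (N w + 1)))) by (field; lra).
  assert (0 < Rabs s * eps) by nra. nra.
Qed.

(* Mean value theorem along the segment; no convexity of [f] is involved. *)
Lemma L_smooth_upper_model L f gf y w : L_smooth N L f gf ->
  f (vadd y w) <= f y + pair n (gf y) w + L / 2 * N w ^ 2.
Proof.
  intros [HL [[Hg _] Hlip]].
  set (c0 := pair n (gf y) w).
  set (k := L / 2 * N w ^ 2).
  set (phi1 := fun s => f (vadd y (vscal s w))).
  set (phi2 := (mult_real_fct c0 id + mult_real_fct k (fun s => s ^ 2))%F).
  assert (Hd : forall t, derivable_pt_lim (phi1 - phi2)%F t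
     (pair n (gf (vadd y (vscal t w))) w - (c0 * 1 + k * (INR 2 * t ^ Init.Nat.pred 2)))).
  { intro t. apply derivable_pt_lim_minus.
    - apply derivable_pt_lim_along_line; exact Hg.
    - apply derivable_pt_lim_plus; apply derivable_pt_lim_scal;
        [apply derivable_pt_lim_id | apply derivable_pt_lim_pow]. }
  set (pr := fun t => exist _ _ (Hd t) : derivable_pt (phi1 - phi2)%F t).
  destruct (MVT_cor1 (phi1 - phi2)%F 0 1 pr Rlt_0_1) as [c [Hc Hc01]].
  simpl in Hc. unfold minus_fct, plus_fct, mult_real_fct, phi1, id in Hc.
  replace (vadd y (vscal 1 w)) with (vadd y w) in Hc by vec_ext.
  replace (vadd y (vscal 0 w)) with y in Hc by vec_ext.
  assert (Hder : pair n (gf (vadd y (vscal c w))) w - c0 <= 2 * k * c).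
  { unfold c0. rewrite <- pair_sub_l.
    eapply Rle_trans; [apply pair_le_dnorm|].
    pose proof (Hlip (vadd y (vscal c w)) y) as Hl.
    replace (vsub (vadd y (vscal c w)) y) with (vscal c w) in Hl by vec_ext.
    rewrite (N_scal N HN), (Rabs_pos_eq c) in Hl by lra.
    pose proof (N_nonneg N HN w).
    unfold k. replace (2 * (L / 2 * N w ^ 2) * c) with (L * (c * N w) * N w) by field.
    apply Rmult_le_compat_r; lra. }
  unfold phi2, plus_fct, mult_real_fct, id, k in *. simpl in Hc. nra.
Qed.

Lemma sharp_step_model sharp L g : is_sharp N sharp -> 0 < L ->
  pair n g (vscal (- (dnorm N g / L)) (sharp g))
    + L / 2 * N (vscal (- (dnorm N g / L)) (sharp g)) ^ 2
  <= - (dnorm N g ^ 2 / (2 * L)).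
Proof.
  intros Hs HL. destruct (Hs g) as [Hs1 Hs2].
  pose proof (dnorm_nonneg g). pose proof (N_nonneg N HN (sharp g)).
  assert (Ht : 0 <= dnorm N g / L) by (unfold Rdiv; apply Rmult_le_pos; [lra | left; apply Rinv_0_lt_compat; lra]).
  rewrite pair_scal_r, Hs2, (N_scal N HN), Rabs_Ropp, Rabs_pos_eq by exact Ht.
  assert (Hsq : (dnorm N g / L * N (sharp g)) ^ 2 <= (dnorm N g / L) ^ 2).
  { assert (dnorm N g / L * N (sharp g) <= dnorm N g / L * 1) by (apply Rmult_le_compat_l; lra).
    apply pow_incr. split; [apply Rmult_le_pos |]; lra. }
  replace (- (dnorm N g ^ 2 / (2 * L)))
    with (- (dnorm N g / L) * dnorm N g + L / 2 * (dnorm N g / L) ^ 2) by (field; lra).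
  nra.
Qed.

Lemma L_smooth_sharp_step sharp L f gf y : is_sharp N sharp -> L_smooth N L f gf ->
  f (vsub y (vscal (dnorm N (gf y) / L) (sharp (gf y))))
    <= f y - dnorm N (gf y) ^ 2 / (2 * L).
Proof.
  intros Hs HL. pose proof HL as [HL0 _].
  replace (vsub y (vscal (dnorm N (gf y) / L) (sharp (gf y))))
    with (vadd y (vscal (- (dnorm N (gf y) / L)) (sharp (gf y)))) by vec_ext.
  pose proof (L_smooth_upper_model L f gf y
                (vscal (- (dnorm N (gf y) / L)) (sharp (gf y))) HL).
  pose proof (sharp_step_model sharp L (gf y) Hs HL0). lra.
Qed.

End DualNorm.
(** * The estimate sequence *)

Section EstimateFunction.
Context {n : nat} (N : Vec n -> R) (HN : is_norm N)
  (d : Vec n -> R) (gd : Vec n -> Vec n) (f : Vec n -> R) (gf : Vec n -> Vec n)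
  (x0 : Vec n) (a : nat -> R) (y : nat -> Vec n).

Local Notation Psi := (psi d gd f gf x0 a y).

Fixpoint psi_gradient (k : nat) (z : Vec n) : Vec n :=
  match k with
  | O => vsub (gd z) (gd x0)
  | S j => vadd (psi_gradient j z) (vscal (a (S j)) (gf (y j)))
  end.

(* [psi_k] differs from [d] by an affine function, so both have the same Bregman divergence. *)
Lemma psi_bregman k : forall z u,
  Psi k z - Psi k u - pair n (psi_gradient k u) (vsub z u) = bregman d gd z u.
Proof.
  induction k as [|k IH]; intros z u; simpl; unfold bregman in *.
  - rewrite !pair_sub_l, !pair_sub_r. ring.
  - specialize (IH z u). rewrite !pair_add_l, !pair_scal_l, !pair_sub_r in *. lra.
Qed.

Lemma psi_has_gradient k u : has_gradient N d (gd u) u -> has_gradient N (Psi k) (psi_gradient k u) u.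
Proof.
  intros Hg eps Heps. destruct (Hg eps Heps) as [delta [Hd Hb]].
  exists delta. split; [exact Hd|]. intros w Hw.
  pose proof (psi_bregman k (vadd u w) u) as E. unfold bregman in E.
  replace (vsub (vadd u w) u) with w in E by vec_ext.
  rewrite E. exact (Hb w Hw).
Qed.

Lemma psi_strong_min k v : prox_function N d gd ->
  (forall z, Psi k v <= Psi k z) -> forall z, Psi k v + / 2 * N (vsub z v) ^ 2 <= Psi k z.
Proof.
  intros [[Hg _] [_ [Hsc _]]] Hmin z.
  assert (H0 : 0 <= pair n (psi_gradient k v) (vsub z v)).
  { apply (pair_nonneg_of_min_along_ray N HN (Psi k) _ v); [apply psi_has_gradient, Hg|].
    intros t _. apply Hmin. }
  pose proof (psi_bregman k z v). pose proof (Hsc v z). unfold bregman in *. lra.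
Qed.

Lemma psi0_min z : prox_function N d gd -> Psi 0 x0 <= Psi 0 z.
Proof.
  intros [_ [_ [Hsc _]]]. simpl. unfold bregman.
  replace (vsub x0 x0) with (@vzero n) by vec_ext. rewrite pair_zero_r.
  pose proof (Hsc x0 z). pose proof (pow2_ge_0 (N (vsub z x0))). lra.
Qed.

End EstimateFunction.

Definition admissible_weight (L G fy fx1 AA aa : R) : Prop :=
  0 < aa /\ AA + aa <= L * aa ^ 2 /\ aa ^ 2 * G ^ 2 / 2 <= (AA + aa) * (fy - fx1).

Lemma optionA_admissible L G fy fx1 AA aa :
  0 < L -> 0 <= AA -> 0 < aa -> aa ^ 2 / (AA + aa) = / L ->
  fx1 <= fy - G ^ 2 / (2 * L) -> admissible_weight L G fy fx1 AA aa.
Proof.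
  intros HL HAA Haa Heq Hdec.
  assert (HLa : L * aa ^ 2 = AA + aa).
  { replace (L * aa ^ 2) with (L * (AA + aa) * (aa ^ 2 / (AA + aa))) by (field; lra).
    rewrite Heq. field. lra. }
  split; [exact Haa | split; [lra|]].
  assert (HGL : G ^ 2 / (2 * L) * (AA + aa) = aa ^ 2 * G ^ 2 / 2)
    by (rewrite <- HLa; field; lra).
  assert (G ^ 2 / (2 * L) * (AA + aa) <= (fy - fx1) * (AA + aa))
    by (apply Rmult_le_compat_r; lra).
  lra.
Qed.

(* Writing [D = fy - fx1] and [s = 2 D / G^2], the defining equation of [a_{k+1}] is
   [a^2 = s (A_k + a)], whose two roots add up to [s > 0]; hence its largest root is positive. *)
Lemma optionB_admissible L G fy fx1 AA aa :
  0 < L -> 0 < G -> 0 <= AA -> fx1 <= fy - G ^ 2 / (2 * L) ->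
  AA + aa <> 0 -> fy - aa ^ 2 / (2 * (AA + aa)) * G ^ 2 = fx1 ->
  (forall a', AA + a' <> 0 -> fy - a' ^ 2 / (2 * (AA + a')) * G ^ 2 = fx1 -> a' <= aa) ->
  admissible_weight L G fy fx1 AA aa.
Proof.
  intros HL HG HAA Hdec Hne Heq Hmax.
  set (D := fy - fx1) in *.
  set (s := 2 * D / G ^ 2).
  assert (HG2 : 0 < G ^ 2) by nra.
  assert (HLs : 1 <= L * s).
  { unfold s. apply Rmult_le_reg_r with (G ^ 2); [exact HG2|].
    replace (L * (2 * D / G ^ 2) * G ^ 2) with (2 * L * D) by (field; lra).
    assert (G ^ 2 / (2 * L) * (2 * L) = G ^ 2) by (field; lra).
    assert (G ^ 2 / (2 * L) <= D) by (unfold D; lra). nra. }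
  assert (Hs : 0 < s) by nra.
  assert (Hroot : forall a', AA + a' <> 0 ->
            a' ^ 2 = s * (AA + a') -> fy - a' ^ 2 / (2 * (AA + a')) * G ^ 2 = fx1).
  { intros a' Ha' Hsq. rewrite Hsq. unfold s, D. field. split; lra. }
  assert (Haa2 : aa ^ 2 = s * (AA + aa)).
  { unfold s. apply Rmult_eq_reg_r with (G ^ 2); [|lra].
    replace D with (aa ^ 2 / (2 * (AA + aa)) * G ^ 2) by (unfold D; lra).
    field. lra. }
  assert (HApos : 0 < AA + aa).
  { destruct (Rle_lt_dec (AA + aa) 0) as [Hle|]; [|assumption].
    assert (AA + aa < 0) by lra. nra. }
  assert (Haa : 0 < aa).
  { apply Rnot_le_lt. intro Hle.
    assert (Hother : s - aa <= aa).
    { apply Hmax; [lra|]. apply Hroot; [lra | nra]. }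
    lra. }
  split; [exact Haa | split].
  - rewrite Haa2. nra.
  - assert (aa ^ 2 * G ^ 2 / 2 = (AA + aa) * D) by (unfold D; rewrite <- Heq; field; lra).
    unfold D in *. lra.
Qed.

(* The inductive step of the estimate-sequence argument, in scalar form: [Pv] and [Pv1] stand
   for [psi_k] at [v^k] and [v^{k+1}], [t = |v^{k+1} - v^k|], [gv] and [gvy] for
   [<g, v^{k+1} - v^k>] and [<g, v^k - y^k>] with [g = grad f y^k] and [G = |g|_*]. *)
Lemma estimate_sequence_step L G AA aa fx fy fx1 Pv Pv1 t gv gvy :
  admissible_weight L G fy fx1 AA aa -> 0 <= AA ->
  AA * fx <= Pv -> Pv + / 2 * t ^ 2 <= Pv1 -> fy <= fx -> 0 <= gvy -> - (G * t) <= gv ->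
  (AA + aa) * fx1 <= Pv1 + aa * (fy + (gv + gvy)).
Proof.
  intros [Haa [_ Hdec]] HAA HP Hstrong Hfy Hgvy Hgv.
  assert (- (aa ^ 2 * G ^ 2 / 2) <= / 2 * t ^ 2 - aa * (G * t))
    by (pose proof (pow2_ge_0 (t - aa * G)); nra).
  assert (AA * fy <= AA * fx) by (apply Rmult_le_compat_l; lra).
  assert (aa * (- (G * t)) <= aa * gv) by (apply Rmult_le_compat_l; lra).
  assert (0 <= aa * gvy) by (apply Rmult_le_pos; lra).
  lra.
Qed.

(* With [u = 2 L a_{k+1}], the constraint [A_k + a <= L a^2] reads [4 L A_{k+1} <= u^2] and
   [4 L A_{k+1} = 4 L A_k + 2 u], which forces [u >= 1 + sqrt (4 L A_k)]. *)
Lemma quadratic_growth_step L AA aa k : 0 < L -> 0 <= k -> k ^ 2 / (4 * L) <= AA -> 0 < aa ->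
  AA + aa <= L * aa ^ 2 -> (k + 1) ^ 2 / (4 * L) <= AA + aa.
Proof.
  intros HL Hk HA Ha Hq.
  assert (HkA : k ^ 2 <= 4 * L * AA).
  { apply Rmult_le_compat_l with (r := 4 * L) in HA; [|lra].
    replace (4 * L * (k ^ 2 / (4 * L))) with (k ^ 2) in HA by (field; lra). exact HA. }
  set (u := 2 * L * aa).
  assert (Hu : 0 < u) by (unfold u; nra).
  assert (Hsq : 4 * L * (AA + aa) <= u ^ 2) by (unfold u; nra).
  assert (Hsum : 4 * L * (AA + aa) = 4 * L * AA + 2 * u) by (unfold u; ring).
  assert (Hu2 : 2 <= u) by nra.
  assert (Hku : k <= u - 1) by nra.
  apply Rmult_le_reg_l with (4 * L); [lra|].
  replace (4 * L * ((k + 1) ^ 2 / (4 * L))) with ((k + 1) ^ 2) by (field; lra).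
  nra.
Qed.

Section AGMsDR.
Context {n : nat} (N : Vec n -> R) (sharp : Vec n -> Vec n) (L : R)
  (f : Vec n -> R) (gf : Vec n -> Vec n) (d : Vec n -> R) (gd : Vec n -> Vec n)
  (opt : step_option) (x0 : Vec n) (x v y : nat -> Vec n) (beta h a A : nat -> R).
Hypothesis HN : is_norm N.
Hypothesis Hsharp : is_sharp N sharp.
Hypothesis Hd : prox_function N d gd.
Hypothesis HL : L_smooth N L f gf.
Hypothesis Hit : AGMsDR_iterates N sharp L f gf d gd opt x0 x v y beta h a A.
Hypothesis Hg0 : forall k, gf (y k) <> vzero.

Local Notation Psi := (psi d gd f gf x0 a y).
Local Notation G k := (dnorm N (gf (y k))).

Lemma iterate_psi_min k z : Psi k (v k) <= Psi k z.
Proof.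
  destruct Hit as [_ [Hv0 [_ Hstep]]]. destruct k as [|k].
  - rewrite Hv0. exact (psi0_min N d gd f gf x0 a y z Hd).
  - destruct (Hstep k) as [_ [_ [_ Hmin]]]. apply Hmin.
Qed.

Lemma iterate_line_search k :
  f (y k) <= f (x k) /\ 0 <= pair n (gf (y k)) (vsub (v k) (y k)).
Proof.
  destruct Hit as [_ [_ [_ Hstep]]]. destruct (Hstep k) as [[Hb01 [Hbmin Hy]] _].
  pose proof HL as [_ [[Hgf _] _]].
  split.
  - rewrite Hy. replace (x k) with (vadd (v k) (vscal 1 (vsub (x k) (v k)))) at 2 by vec_ext.
    apply Hbmin; lra.
  - apply (pair_nonneg_of_min_along_ray N HN f _ (y k)); [apply Hgf|].
    intros t Ht.
    replace (vadd (y k) (vscal t (vsub (v k) (y k))))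
      with (vadd (v k) (vscal (beta k * (1 - t)) (vsub (x k) (v k)))) by (rewrite Hy; vec_ext).
    rewrite Hy. apply Hbmin. split; nra.
Qed.

Lemma iterate_sufficient_decrease k : f (x (S k)) <= f (y k) - G k ^ 2 / (2 * L).
Proof.
  destruct Hit as [_ [_ [_ Hstep]]]. destruct (Hstep k) as [_ [Hopt _]].
  pose proof (L_smooth_sharp_step N HN sharp L f gf (y k) Hsharp HL) as Hsharp_step.
  pose proof HL as [HL0 _].
  destruct opt.
  - destruct Hopt as [Hmodel _].
    pose proof (L_smooth_upper_model N HN L f gf (y k) (vsub (x (S k)) (y k)) HL) as Hup.
    replace (vadd (y k) (vsub (x (S k)) (y k))) with (x (S k)) in Hup by vec_ext.
    specialize (Hmodel (vsub (y k) (vscal (G k / L) (sharp (gf (y k)))))).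
    replace (vsub (vsub (y k) (vscal (G k / L) (sharp (gf (y k))))) (y k))
      with (vscal (- (G k / L)) (sharp (gf (y k)))) in Hmodel by vec_ext.
    pose proof (sharp_step_model N HN sharp L (gf (y k)) Hsharp HL0). lra.
  - destruct Hopt as [[_ [Hhmin Hx1]] _].
    rewrite Hx1. eapply Rle_trans; [apply Hhmin | exact Hsharp_step].
    pose proof (dnorm_nonneg N HN (gf (y k))).
    unfold Rdiv; apply Rmult_le_pos; [lra | left; apply Rinv_0_lt_compat; lra].
Qed.

Lemma iterate_admissible k : 0 <= A k ->
  admissible_weight L (G k) (f (y k)) (f (x (S k))) (A k) (a (S k)).
Proof.
  intro HA. destruct Hit as [_ [_ [_ Hstep]]]. destruct (Hstep k) as [_ [Hopt _]].
  pose proof (iterate_sufficient_decrease k) as Hdec. pose proof HL as [HL0 _].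
  destruct opt.
  - destruct Hopt as [_ [Ha Heq]]. exact (optionA_admissible _ _ _ _ _ _ HL0 HA Ha Heq Hdec).
  - destruct Hopt as [_ [Hne [Heq Hmax]]].
    exact (optionB_admissible _ _ _ _ _ _ HL0 (dnorm_pos N HN _ (Hg0 k)) HA Hdec Hne Heq Hmax).
Qed.

Lemma iterate_estimates k : A k * f (x k) <= Psi k (v k) /\ INR k ^ 2 / (4 * L) <= A k.
Proof.
  pose proof HL as [HL0 _].
  destruct Hit as [_ [Hv0 [HA0 Hstep]]].
  induction k as [|k [IHf IHA]].
  - simpl. rewrite HA0, Hv0. unfold bregman.
    replace (vsub x0 x0) with (@vzero n) by vec_ext. rewrite pair_zero_r. split; lra.
  - destruct (Hstep k) as [_ [_ [HAS _]]].
    assert (HA : 0 <= A k).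
    { eapply Rle_trans; [|exact IHA].
      apply Rmult_le_pos; [apply pow2_ge_0 | left; apply Rinv_0_lt_compat; lra]. }
    destruct (iterate_line_search k) as [Hfy Hgvy].
    pose proof (iterate_admissible k HA) as Hw.
    rewrite HAS. split.
    + cbn [psi].
      replace (pair n (gf (y k)) (vsub (v (S k)) (y k)))
        with (pair n (gf (y k)) (vsub (v (S k)) (v k)) + pair n (gf (y k)) (vsub (v k) (y k)))
        by (rewrite !pair_sub_r; ring).
      apply (estimate_sequence_step L (G k) _ _ (f (x k)) _ _ (Psi k (v k)) _
               (N (vsub (v (S k)) (v k)))); auto.
      * exact (psi_strong_min N HN d gd f gf x0 a y k (v k) Hd (iterate_psi_min k) (v (S k))).
      * apply (pair_ge_neg_dnorm N HN).
    + rewrite S_INR. destruct Hw as [Ha [Hq _]].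
      apply quadratic_growth_step; auto using pos_INR.
Qed.

End AGMsDR.

Theorem mainTheorem1 (n : nat) (N : Vec n -> R) (sharp : Vec n -> Vec n) (L : R)
  (f : Vec n -> R) (gf : Vec n -> Vec n) (d : Vec n -> R) (gd : Vec n -> Vec n)
  (opt : step_option) (x0 : Vec n)
  (x v y : nat -> Vec n) (beta h a A : nat -> R) :
  is_norm N ->
  is_sharp N sharp ->
  prox_function N d gd ->
  L_smooth N L f gf ->
  AGMsDR_iterates N sharp L f gf d gd opt x0 x v y beta h a A ->
  (forall k, gf (y k) <> vzero) ->
  forall k : nat,
    A k * f (x k) <= psi d gd f gf x0 a y k (v k) /\
    (forall z, psi d gd f gf x0 a y k (v k) <= psi d gd f gf x0 a y k z) /\
    (INR k) ^ 2 / (4 * L) <= A k.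
Proof.
  intros HN Hsharp Hd HL Hit Hg0 k.
  destruct (iterate_estimates N sharp L f gf d gd opt x0 x v y beta h a A
              HN Hsharp Hd HL Hit Hg0 k) as [Hf HA].
  split; [exact Hf | split; [|exact HA]].
  exact (iterate_psi_min N sharp L f gf d gd opt x0 x v y beta h a A Hd Hit k).
Qed.
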